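(* For every vertex $t\in\mathbb T_n$, $\tilde G_t\tilde B_t=\tilde B_{t_0}C_t$.
   Context: $m\ge n\ge1$, $[b]_+=\max(b,0)$. $\mathbb T_n$ is the $n$-regular tree with edges labeled $1,\dots,n$, distinct labels at each vertex; $t\overset{k}{-}t'$ denotes an edge labeled $k$; $t_0$ a root. Fix positive integers $r_1,\dots,r_n$, $R=\mathrm{diag}(r_1,\dots,r_n)$, and an integer $m\times n$ matrix $\tilde B=(b_{ij})$ whose top $n\times n$ part $B$ is skew-symmetrizable (in the paper $\tilde B$ is part of a compatible pair $(\tilde B,\Lambda)$ of an $(R,\mathbf h)$-quantum seed). Assign matrices $\tilde B_t=(b_{ij;t})$ ($m\times n$) with $\tilde B_{t_0}=\tilde B$ and, for $t\overset{k}{-}t'$, $\tilde B_{t'}=E\tilde B_tF$ where $E$ is the $m\times m$ identity with $k$-th column replaced by $-1$ at position $k$ and $[-\varepsilon b_{ik;t}r_k]_+$ at positions $i\neq k$, and $F$ is the $n\times n$ identity with $k$-th row replaced by $-1$ at position $k$ and $[\varepsilon r_kb_{ki;t}]_+$ at positions $i\ne k$ (equivalently $b_{ij;t'}=-b_{ij;t}$ if $i=k$ or $j=k$, else $b_{ij;t}+r_k([-\varepsilon b_{ik;t}]_+b_{kj;t}+b_{ik;t}[\varepsilon b_{kj;t}]_+)$); here and below $\varepsilon\in\{\pm1\}$ and the results are independent of it. Let $B_t$ be the top $n\times n$ part of $\tilde B_t$. The $n\times n$ matrix $C_t=(c_{ij;t})$ is defined by $C_{t_0}=I_n$ and $c_{ij;t'}=-c_{ij;t}$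 if $j=k$, else $c_{ij;t}+r_k(c_{ik;t}[\varepsilon b_{kj;t}]_++[-\varepsilon c_{ik;t}]_+b_{kj;t})$. The $m\times m$ matrix $\tilde G_t$ with columns $\tilde{\mathbf g}_{i;t}$ is defined by $\tilde G_{t_0}=I_m$ and $\tilde{\mathbf g}_{i;t'}=\tilde{\mathbf g}_{i;t}$ for $i\ne k$, $\tilde{\mathbf g}_{k;t'}=-\tilde{\mathbf g}_{k;t}+r_k\big(\sum_{j=1}^m[-\varepsilon b_{jk;t}]_+\tilde{\mathbf g}_{j;t}-\sum_{j=1}^n[-\varepsilon c_{jk;t}]_+\mathbf b_{j;t_0}\big)$, where $\mathbf b_{j;t_0}$ is the $j$-th column of $\tilde B$. *)

From HB Require Import structures.
From mathcomp Require Import all_boot all_order all_algebra.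
Set Implicit Arguments. Unset Strict Implicit. Unset Printing Implicit Defensive.
Import Order.TTheory GRing.Theory Num.Theory.
Local Open Scope ring_scope.

Definition pos (x : int) : int := Num.max x 0.

Definition sgn (e : bool) : int := if e then 1 else -1.

Section Mut.
Variables (m n : nat) (hnm : (n <= m)%N) (r : 'I_n -> int).

Definition wid (k : 'I_n) : 'I_m := widen_ord hnm k.

Definition mutB (k : 'I_n) (e : bool) (B : 'M[int]_(m, n)) : 'M[int]_(m, n) :=
  \matrix_(i < m, j < n)
    if (i == wid k) || (j == k) then - B i j
    else B i j + r k * (pos (- sgn e * B i k) * B (wid k) j
                        + B i k * pos (sgn e * B (wid k) j)).

Definition mutC (k : 'I_n) (e : bool) (B : 'M[int]_(m, n)) (C : 'M[int]_n)
  : 'M[int]_n :=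
  \matrix_(i < n, j < n)
    if j == k then - C i j
    else C i j + r k * (C i k * pos (sgn e * B (wid k) j)
                        + pos (- sgn e * C i k) * B (wid k) j).

(* mutation of the extended G-matrix (columns g_i), using B_t, C_t and B_{t0} *)
Definition mutG (k : 'I_n) (e : bool) (B0 B : 'M[int]_(m, n)) (C : 'M[int]_n)
  (G : 'M[int]_m) : 'M[int]_m :=
  \matrix_(i < m, j < m)
    if j == wid k then
      - G i (wid k)
      + r k * (\sum_(l < m) pos (- sgn e * B l k) * G i l
               - \sum_(l < n) pos (- sgn e * C l k) * B0 i l)
    else G i j.

Definition mutStep (B0 : 'M[int]_(m, n))
  (s : 'M[int]_(m, n) * 'M[int]_n * 'M[int]_m) (ke : 'I_n * bool) :=
  let: (B, C, G) := s in
  let: (k, e) := ke in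
  (mutB k e B, mutC k e B C, mutG k e B0 B C G).

(* The vertex t of T_n reached from t0 along the path whose successive edge
   labels are the first components of w; the second components are the
   signs epsilon used at each step. *)
Definition seedAt (B0 : 'M[int]_(m, n)) (w : seq ('I_n * bool)) :=
  foldl (mutStep B0) (B0, 1%:M, 1%:M) w.

End Mut.

(* w encodes a path from the root in the n-regular tree: no two consecutive
   edges carry the same label (otherwise one walks back). *)
Definition reduced_word (n : nat) (w : seq ('I_n * bool)) : bool :=
  sorted (fun a b => a.1 != b.1) w.

Definition Bmat n m hnm r B0 w := (@seedAt m n hnm r B0 w).1.1.
Definition Cmat n m hnm r B0 w := (@seedAt m n hnm r B0 w).1.2.
Definition Gmat n m hnm r B0 w := (@seedAt m n hnm r B0 w).2.

From mathcomp Require Import all_boot all_order all_algebra.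
From mathcomp Require Import ring lra.
Import Order.TTheory GRing.Theory Num.Theory.
Local Open Scope ring_scope.

(* Induction along the path from t0: one mutation step preserves the identity
   G B = B0 C, and the proof of that step only needs b_kk = 0, which holds
   because mutation preserves skew-symmetrizability (with the same D).  In
   column k both sides just change sign; in a column j <> k, expanding the new
   k-th column of G and the new column of B, the correction terms on the left
   reduce, through G B = B0 C, to exactly those produced by the mutation of C. *)

Lemma pos0 : pos 0 = 0.
Proof. by rewrite /pos maxxx. Qed.

Lemma pos_pMl (d x : int) : 0 < d -> pos (d * x) = d * pos x.
Proof. by move=> d_gt0; rewrite /pos maxr_pMr ?mulr0 // ltW. Qed.

Lemma eq_wid m n (hnm : (n <= m)%N) (i k : 'I_n) :
  (wid hnm i == wid hnm k) = (i == k).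
Proof. by []. Qed.

Lemma sumr_neq m (p : 'I_m) (F : 'I_m -> int) :
  \sum_(l | l != p) F l = \sum_l F l - F p.
Proof. by rewrite [in RHS](bigD1 p) //= addrC addrK. Qed.

Definition skew_symmetrized_by {m n} (hnm : (n <= m)%N) (d : 'I_n -> int)
  (B : 'M[int]_(m, n)) :=
  forall i j : 'I_n, d i * B (wid hnm i) j = - (d j * B (wid hnm j) i).

Section Skew.
Variables (m n : nat) (hnm : (n <= m)%N) (r d : 'I_n -> int).
Hypothesis d_gt0 : forall i, 0 < d i.
Variable B : 'M[int]_(m, n).
Hypothesis skewB : skew_symmetrized_by hnm d B.

Lemma skew_diag0 k : B (wid hnm k) k = 0.
Proof.
have : d k * B (wid hnm k) k = 0 by move: (skewB k k); lra.
by move/eqP; rewrite mulf_eq0 gt_eqF ?d_gt0 //= => /eqP.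
Qed.

Lemma skew_pos_transpose e i k :
  d i * pos (- sgn e * B (wid hnm i) k) = d k * pos (sgn e * B (wid hnm k) i).
Proof.
rewrite -!pos_pMl //; congr pos.
by rewrite mulrCA skewB; ring.
Qed.

Lemma mutB_skew k e : skew_symmetrized_by hnm d (mutB hnm r k e B).
Proof.
move=> i j; rewrite !mxE !eq_wid.
have [->|ik] := eqVneq i k; first by rewrite orbT !mulrN skewB.
have [->|jk] := eqVneq j k; first by rewrite !mulrN skewB.
have Sik := skewB i k; have Sjk := skewB j k; have Sij := skewB i j.
have Pik := skew_pos_transpose e i k; have Pjk := skew_pos_transpose e j k.
move: Sik Sjk Sij Pik Pjk => /=.
set s := sgn e; set p := wid hnm k.
set bij := B (wid hnm i) j; set bji := B (wid hnm j) i.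
set bik := B (wid hnm i) k; set bjk := B (wid hnm j) k.
set bki := B p i; set bkj := B p j.
set u := pos (- s * bik); set v := pos (- s * bjk).
move=> Sik Sjk Sij Pik Pjk.
have -> : d i * (bij + r k * (u * bkj + bik * pos (s * bkj)))
  = d i * bij + r k * ((d i * u) * bkj + (d i * bik) * pos (s * bkj)) by ring.
have -> : d j * (bji + r k * (v * bki + bjk * pos (s * bki)))
  = d j * bji + r k * ((d j * v) * bki + (d j * bjk) * pos (s * bki)) by ring.
rewrite Pik Pjk Sik Sjk Sij; ring.
Qed.

End Skew.

Section MutationStep.
Variables (m n : nat) (hnm : (n <= m)%N) (r : 'I_n -> int).
Variables (B0 B : 'M[int]_(m, n)) (C : 'M[int]_n) (G : 'M[int]_m).
Variables (k : 'I_n) (e : bool).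
Hypothesis GB : G *m B = B0 *m C.
Hypothesis Bkk0 : B (wid hnm k) k = 0.

Local Notation p := (wid hnm k).
Local Notation B' := (mutB hnm r k e B).
Local Notation G' := (mutG hnm r k e B0 B C G).

Let GB_entry i j : \sum_l G i l * B l j = \sum_l B0 i l * C l j.
Proof. by move/matrixP: GB => /(_ i j); rewrite !mxE. Qed.

Lemma mutG_mul_mutB_entry i j :
  (G' *m B') i j = \sum_(l | l != p) G i l * B' l j + G' i p * B' p j.
Proof.
rewrite mxE (bigD1 p) //= addrC; congr (_ + _).
by apply: eq_bigr => l lp; rewrite [G' i l]mxE (negbTE lp).
Qed.

Lemma mutG_mul_mutB_col_k i : (G' *m B') i k = (B0 *m mutC hnm r k e B C) i k.
Proof.
rewrite mutG_mul_mutB_entry [B' p k]mxE eqxx Bkk0 oppr0 mulr0 addr0.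
under eq_bigr => l _ do rewrite [B' l k]mxE eqxx orbT mulrN.
rewrite mxE; under [in RHS]eq_bigr => l _ do rewrite mxE eqxx mulrN.
by rewrite sumrN sumr_neq Bkk0 mulr0 subr0 GB_entry sumrN.
Qed.

Lemma mutG_mul_mutB_col_neq i j : j != k ->
  (G' *m B') i j = (B0 *m mutC hnm r k e B C) i j.
Proof.
move=> jk; rewrite mutG_mul_mutB_entry [B' p j]mxE eqxx [G' i p]mxE eqxx /=.
under eq_bigr => l _ do rewrite [B' l j]mxE (negbTE jk) orbF.
rewrite mxE; under [in RHS]eq_bigr => l _ do rewrite mxE (negbTE jk).
set x := B p j; set y := pos (sgn e * x).
(* For l <> p the entries of B' follow the generic formula, whose value at
   l = p is just x because b_kk = 0. *)
have -> : \sum_(l | l != p) G i l *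
     (if l == p then - B l j
      else B l j + r k * (pos (- sgn e * B l k) * x + B l k * y))
  = \sum_l G i l * B l j + r k * x * \sum_l pos (- sgn e * B l k) * G i l
    + r k * y * \sum_l G i l * B l k - G i p * x.
  under eq_bigr => l lp do rewrite (negbTE lp).
  rewrite sumr_neq Bkk0 mulr0 pos0 !mul0r addr0 mulr0 addr0.
  congr (_ - _); rewrite !mulr_sumr -!big_split /=; apply: eq_bigr => l _; ring.
have -> : \sum_l B0 i l * (C l j + r k * (C l k * y + pos (- sgn e * C l k) * x))
  = \sum_l B0 i l * C l j + r k * y * \sum_l B0 i l * C l k
    + r k * x * \sum_l pos (- sgn e * C l k) * B0 i l.
  by rewrite !mulr_sumr -!big_split /=; apply: eq_bigr => l _; ring.
rewrite !GB_entry; ring.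
Qed.

Lemma mutG_mul_mutB : G' *m B' = B0 *m mutC hnm r k e B C.
Proof.
apply/matrixP => i j; have [->|jk] := eqVneq j k.
- exact: mutG_mul_mutB_col_k.
- exact: mutG_mul_mutB_col_neq.
Qed.

End MutationStep.

Lemma seedAt_rcons m n (hnm : (n <= m)%N) (r : 'I_n -> int) B0 w ke :
  seedAt hnm r B0 (rcons w ke) = mutStep hnm r B0 (seedAt hnm r B0 w) ke.
Proof. exact: foldl_rcons. Qed.

Lemma seedAt_invariant {m n} (hnm : (n <= m)%N) (r : 'I_n -> int) {d : 'I_n -> int}
    (d_gt0 : forall i, 0 < d i) (B0 : 'M[int]_(m, n)) w :
  skew_symmetrized_by hnm d B0 ->
  let: (B, C, G) := seedAt hnm r B0 w in
  G *m B = B0 *m C /\ skew_symmetrized_by hnm d B.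
Proof.
move=> skewB0; elim/last_ind: w => [|w [k e]].
  by rewrite /= mul1mx mulmx1.
rewrite seedAt_rcons; case: (seedAt _ _ _ w) => [[B C] G] [GB skewB] /=.
split; last exact: mutB_skew.
by apply: mutG_mul_mutB => //; apply: skew_diag0.
Qed.

Theorem mainTheorem7 (m n : nat) (hn : (1 <= n)%N) (hnm : (n <= m)%N)
  (r : 'I_n -> int) (hr : forall i, 0 < r i)
  (B0 : 'M[int]_(m, n))
  (hskew : exists d : 'I_n -> int, (forall i, 0 < d i) /\
             forall i j : 'I_n, d i * B0 (widen_ord hnm i) j
                                = - (d j * B0 (widen_ord hnm j) i))
  (w : seq ('I_n * bool)) (hw : reduced_word w) :
  Gmat hnm r B0 w *m Bmat hnm r B0 w = B0 *m Cmat hnm r B0 w.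
Proof.
have [d [d_gt0 skewB0]] := hskew.
have := seedAt_invariant hnm r d_gt0 B0 w skewB0.
by rewrite /Gmat /Bmat /Cmat; case: (seedAt _ _ _ w) => [[B C] G] [].
Qed.
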